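(* Let $R$ be a commutative Noetherian ring, $M$ a faithful primeful $R$-module having at least one prime submodule, $X=\mathrm{Spec}(M)$, $N$ an $R$-module, $K\le M$, and $U=X\setminus V(K)$. If the ideal $(K:M)$ contains an $N$-sequence of length $2$, then $\mathcal{A}(N,M)(U)\cong N$.
   Context: For a submodule $L$ of an $R$-module $M$, $(L:M)=\{r\in R\mid rM\subseteq L\}$. A submodule $P$ of $M$ is prime if $P\neq M$ and whenever $rm\in P$ ($r\in R$, $m\in M$) then $r\in (P:M)$ or $m\in P$. $\mathrm{Spec}(M)$ is the set of prime submodules. $M$ is faithful if $\mathrm{Ann}_R(M)=0$; primeful if $M=0$ or $\mathrm{Spec}(M)\to\mathrm{Spec}(R/\mathrm{Ann}(M))$, $P\mapsto(P:M)/\mathrm{Ann}(M)$, is surjective. For $L\le M$, $V(L)=\{P\in X\mid (P:M)\supseteq (L:M)\}$; these are the closed sets of the Zariski topology. For open $U\subseteq X$, $\mathrm{Supp}(U)=\{(P:M)\mid P\in U\}$. $\mathcal{A}(N,M)(U)$ is the $R$-module of families $(\gamma_{\mathfrak p})_{\mathfrak p\in\mathrm{Supp}(U)}\in\prod_{\mathfrak p\in\mathrm{Supp}(U)}N_{\mathfrak p}$ such that for each $Q\in U$ there exist an open neighbourhood $W\subseteq U$ of $Q$ and $s\in R$, $m\in N$ with $s\notin(P:M)$ and $\gamma_{(P:M)}=m/s$ for every $P\in W$. A sequence $a_1,\dots,a_n\in R$ is an $N$-sequence if $a_i$ is a non-zero-divisor on $N/(a_1,\dots,a_{i-1})N$ for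 each $i$ and $N/(a_1,\dots,a_n)N\neq0$. *)

From HB Require Import structures.
From mathcomp Require Import all_boot all_order all_algebra.
Set Implicit Arguments. Unset Strict Implicit. Unset Printing Implicit Defensive.
Import GRing.Theory.
Local Open Scope ring_scope.

Section Defs.
Variable R : comPzRingType.

Definition ideal (I : R -> Prop) : Prop :=
  I 0 /\ (forall a b, I a -> I b -> I (a + b)) /\ (forall r a, I a -> I (r * a)).

Definition prime_ideal (p : R -> Prop) : Prop :=
  ideal p /\ ~ p 1 /\ (forall a b, p (a * b) -> p a \/ p b).

Definition noetherian_ring : Prop :=
  forall I : nat -> R -> Prop,
    (forall n, ideal (I n)) ->
    (forall n r, I n r -> I n.+1 r) ->
    exists n, forall m, (n <= m)%N -> forall r, I m r <-> I n r.

Section Module.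
Variable M : lmodType R.

Definition submodule (L : M -> Prop) : Prop :=
  L 0 /\ (forall x y, L x -> L y -> L (x + y)) /\ (forall r x, L x -> L (r *: x)).

Definition colon (L : M -> Prop) : R -> Prop := fun r => forall m, L (r *: m).

Definition prime_submodule (P : M -> Prop) : Prop :=
  submodule P /\ (exists m, ~ P m) /\
  (forall r m, P (r *: m) -> colon P r \/ P m).

Definition ann : R -> Prop := fun r => forall m : M, r *: m = 0.

Definition faithful : Prop := forall r, ann r -> r = 0.

(* primeful: M = 0, or P |-> (P:M)/Ann(M) is onto Spec(R/Ann(M)); prime
   ideals of R/Ann(M) are identified with the prime ideals of R containing
   Ann(M) (correspondence theorem). *)
Definition primeful : Prop :=
  (forall m : M, m = 0) \/
  (forall p, prime_ideal p -> (forall r, ann r -> p r) ->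
     exists P, prime_submodule P /\ colon P = p).

Definition VZ (L : M -> Prop) : (M -> Prop) -> Prop :=
  fun P => prime_submodule P /\ (forall r, colon L r -> colon P r).

Definition zopen (U : (M -> Prop) -> Prop) : Prop :=
  exists L, submodule L /\
    forall P, U P <-> (prime_submodule P /\ ~ VZ L P).

Definition Supp (U : (M -> Prop) -> Prop) : (R -> Prop) -> Prop :=
  fun p => exists P, U P /\ colon P = p.

Section Sheaf.
Variable N : lmodType R.

(* Elements of the localization N_p are represented by fractions m/s, i.e.
   pairs (m, s) with s ∉ p, up to the usual equivalence:
   m/s = m'/s' in N_p  iff  exists t ∉ p, t (s' m - s m') = 0. *)
Definition loc_eq (p : R -> Prop) (x y : N * R) : Prop :=
  exists t, ~ p t /\ t *: (y.2 *: x.1 - x.2 *: y.1) = 0.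

Definition frac_add (x y : N * R) : N * R :=
  (y.2 *: x.1 + x.2 *: y.1, x.2 * y.2).
Definition frac_scale (r : R) (x : N * R) : N * R := (r *: x.1, x.2).

(* gamma is an element of A(N,M)(U): a family (gamma_p)_{p in Supp U},
   gamma_p in N_p (given by a representative fraction), locally of the
   form m/s. *)
Definition A_section (U : (M -> Prop) -> Prop)
    (gamma : (R -> Prop) -> N * R) : Prop :=
  (forall p, Supp U p -> ~ p (gamma p).2) /\
  (forall Q, U Q ->
     exists W : (M -> Prop) -> Prop,
       zopen W /\ (forall P, W P -> U P) /\ W Q /\
       exists (s : R) (m : N), forall P, W P ->
         ~ colon P s /\ loc_eq (colon P) (gamma (colon P)) (m, s)).

(* A(N,M)(U) ≅ N as R-modules: there is an R-linear bijection from N onto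
   A(N,M)(U), where A(N,M)(U) carries the componentwise module structure and
   two sections are equal iff they agree in every N_p, p in Supp U. *)
Definition A_iso_N (U : (M -> Prop) -> Prop) : Prop :=
  exists phi : N -> ((R -> Prop) -> N * R),
    (forall n, A_section U (phi n)) /\
    (forall x y p, Supp U p -> loc_eq p (phi (x + y) p) (frac_add (phi x p) (phi y p))) /\
    (forall r x p, Supp U p -> loc_eq p (phi (r *: x) p) (frac_scale r (phi x p))) /\
    (forall x y, (forall p, Supp U p -> loc_eq p (phi x p) (phi y p)) -> x = y) /\
    (forall gamma, A_section U gamma ->
       exists n, forall p, Supp U p -> loc_eq p (phi n p) (gamma p)).

Definition seq_submod (s : seq R) (i : nat) : N -> Prop :=
  fun x => exists y : nat -> N, x = \sum_(j < i) s`_j *: y j.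

Definition N_sequence (s : seq R) : Prop :=
  (forall i, (i < size s)%N ->
     forall x : N, seq_submod s i (s`_i *: x) -> seq_submod s i x) /\
  (exists x : N, ~ seq_submod s (size s) x).

End Sheaf.
End Module.
End Defs.

(* Write [D = (K:M)]. As [M] is faithful and primeful, [Supp U] is the set of
   primes of [R] not containing [D], i.e. the union of the basic opens [D(c)],
   [c] in [D]; a section over [U] is a family of germs of fractions on this set,
   locally of the form [m/s]. In a Noetherian ring, if no prime avoiding [c]
   contains an ideal [I], then a power of [c] lies in [I]; with this the germs
   over [D(c)] glue to a single fraction [v/c^k]. For the [N]-sequence [a, b]
   in [D], the fractions [x/a^k] and [y/b^l] obtained this way agree on
   [D(ab)]; cancelling powers of [a] and using that [b] is regular on
   [N/a^k N] gives [x = a^k n], and [n/1] is the section. Since [D(a)] lies in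
   [Supp U] and [a] is regular, [n] is unique. *)

From HB Require Import structures.
From mathcomp Require Import all_boot all_order all_algebra.
From mathcomp Require Import ring.
From Stdlib Require Import Classical ClassicalEpsilon.
Set Implicit Arguments. Unset Strict Implicit. Unset Printing Implicit Defensive.
Import GRing.Theory.
Local Open Scope ring_scope.

Section Ideals.
Variable R : comPzRingType.
Implicit Types (q I J : R -> Prop) (a b c r : R).

Lemma ideal_notMl q a b : ideal q -> ~ q (a * b) -> ~ q a.
Proof. by move=> [_ [_ qM]] qNab qa; apply: qNab; rewrite mulrC; apply: qM. Qed.

Lemma ideal_notMr q a b : ideal q -> ~ q (a * b) -> ~ q b.
Proof. by move=> [_ [_ qM]] qNab qb; apply: qNab; apply: qM. Qed.

Lemma ideal_sum q n (F : 'I_n -> R) : ideal q -> (forall i, q (F i)) -> q (\sum_i F i).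
Proof. by move=> [q0 [qD _]] qF; elim/big_ind: _. Qed.

Lemma ideal_notsum q n (d g : 'I_n -> R) :
  ideal q -> ~ q (\sum_i d i * g i) -> exists i, ~ q (g i).
Proof.
move=> qI qNs; apply: NNPP => qg; apply: qNs; apply: ideal_sum => // i.
case: (qI) => [_ [_ qM]]; apply: qM; apply: NNPP => qNg; apply: qg; by exists i.
Qed.

Lemma prime_notM q a b : prime_ideal q -> ~ q a -> ~ q b -> ~ q (a * b).
Proof. by move=> [_ [_ qP]] qNa qNb /qP[]. Qed.

Lemma prime_notX q a k : prime_ideal q -> ~ q a -> ~ q (a ^+ k).
Proof.
move=> qP qNa; elim: k => [|k IHk]; first by rewrite expr0; case: qP => _ [].
by rewrite exprS; apply: prime_notM.
Qed.

Definition ideal_span (A : Type) (f : A -> R) r : Prop :=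
  exists n (d : 'I_n -> R) (x : 'I_n -> A), r = \sum_i d i * f (x i).

Lemma ideal_span_ideal (A : Type) (f : A -> R) : ideal (ideal_span f).
Proof.
split.
  have x : 'I_0 -> A by case.
  by exists 0%N, (fun=> 0), x; rewrite big_ord0.
split.
  move=> _ _ [n1 [d1 [x1 ->]]] [n2 [d2 [x2 ->]]].
  exists (n1 + n2)%N, (fun i => match split i with inl j => d1 j | inr j => d2 j end),
    (fun i => match split i with inl j => x1 j | inr j => x2 j end).
  rewrite big_split_ord /=; congr (_ + _); apply: eq_bigr => i _.
    by rewrite -[lshift _ _]/(unsplit (inl i)) unsplitK.
  by rewrite -[rshift _ _]/(unsplit (inr i)) unsplitK.
move=> r _ [n [d [x ->]]]; exists n, (fun i => r * d i), x.
by rewrite mulr_sumr; apply: eq_bigr => i _; rewrite mulrA.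
Qed.

Lemma ideal_span_gen (A : Type) (f : A -> R) x : ideal_span f (f x).
Proof. by exists 1%N, (fun=> 1), (fun=> x); rewrite big_ord1 mul1r. Qed.

Lemma noetherian_maximal (F : (R -> Prop) -> Prop) J0 :
  noetherian_ring R -> (forall J, F J -> ideal J) -> F J0 ->
  exists2 J, F J & forall J', F J' -> (forall r, J r -> J' r) -> forall r, J' r -> J r.
Proof.
move=> noethR FI FJ0; apply: NNPP => noMax.
have next_ex (J : {J | F J}) : exists J' : {J | F J},
    (forall r, sval J r -> sval J' r) /\ exists r, sval J' r /\ ~ sval J r.
  case: J => J FJ; apply: NNPP => Jmax; apply: noMax; exists J => // J' FJ' JJ' r J'r.
  apply: NNPP => NJr; apply: Jmax; exists (exist F J' FJ'); split => //; by exists r.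
have [next nextP] := choice _ next_ex.
pose chain n := iter n next (exist F J0 FJ0).
have [n chain_stable] := noethR (fun n => sval (chain n))
  (fun n => FI _ (svalP (chain n))) (fun n => proj1 (nextP (chain n))).
have [_ [r [r_next r_n]]] := nextP (chain n).
by apply: r_n; apply/(chain_stable n.+1 (leqnSn n)).
Qed.

Lemma maximal_avoiding_exp_prime J c :
  ideal J -> (forall k, ~ J (c ^+ k)) ->
  (forall J', ideal J' -> (forall k, ~ J' (c ^+ k)) ->
     (forall r, J r -> J' r) -> forall r, J' r -> J r) ->
  prime_ideal J.
Proof.
move=> JI Jc Jmax; split=> //; split; first by move=> J1; apply: (Jc 0%N); rewrite expr0.
case: (JI) => [J0 [JD JM]].
have Jz_exp z : ~ J z -> exists k j r, J j /\ c ^+ k = j + r * z.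
  move=> NJz; apply: NNPP => NJzc.
  pose Jz w := exists j r, J j /\ w = j + r * z.
  apply: NJz; apply: (Jmax Jz); last by exists 0, 1; rewrite mul1r add0r.
  - split; first by exists 0, 0; rewrite mul0r addr0.
    split.
      move=> _ _ [j1 [r1 [Jj1 ->]]] [j2 [r2 [Jj2 ->]]]; exists (j1 + j2), (r1 + r2).
      by split; [apply: JD | ring].
    move=> r _ [j1 [r1 [Jj1 ->]]]; exists (r * j1), (r * r1).
    by split; [apply: JM | ring].
  - by move=> k [j [r [Jj Ec]]]; apply: NJzc; exists k, j, r.
  - by move=> u Ju; exists u, 0; rewrite mul0r addr0.
move=> x y Jxy; apply: NNPP => NJxy.
have [k1 [j1 [r1 [Jj1 Ex]]]] := Jz_exp x (fun Jx => NJxy (or_introl Jx)).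
have [k2 [j2 [r2 [Jj2 Ey]]]] := Jz_exp y (fun Jy => NJxy (or_intror Jy)).
apply: (Jc (k1 + k2)%N); rewrite exprD Ex Ey.
have -> : (j1 + r1 * x) * (j2 + r2 * y) =
    (j2 + r2 * y) * j1 + (r1 * x * j2 + r1 * r2 * (x * y)) by ring.
by apply: (JD); [apply: JM | apply: (JD); apply: (JM)].
Qed.

(* Otherwise the ideals containing [I] and no power of [c] have a maximal
   element, which is a prime containing [I] and avoiding [c]. *)
Lemma exp_mem_ideal I c : noetherian_ring R -> ideal I ->
  (forall q, prime_ideal q -> ~ q c -> exists2 r, I r & ~ q r) ->
  exists k, I (c ^+ k).
Proof.
move=> noethR II Icover; apply: NNPP => NIc.
pose F J := [/\ ideal J, forall r, I r -> J r & forall k, ~ J (c ^+ k)].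
have [J [JI IJ Jc] Jmax] : exists2 J, F J & forall J', F J' ->
    (forall r, J r -> J' r) -> forall r, J' r -> J r.
  apply: (noetherian_maximal (J0 := I)) => //; first by move=> J [].
  by split=> // k Ick; apply: NIc; exists k.
have Jprime : prime_ideal J.
  apply: maximal_avoiding_exp_prime => // J' J'I J'c JJ'.
  by apply: Jmax => //; split=> // r /IJ /JJ'.
have [r Ir NJr] := Icover J Jprime (fun Jc1 => Jc 1%N ltac:(by rewrite expr1)).
exact: NJr (IJ r Ir).
Qed.

Lemma exp_mem_ideal_span (A : Type) (f : A -> R) c : noetherian_ring R ->
  (forall q, prime_ideal q -> ~ q c -> exists x, ~ q (f x)) ->
  exists k, ideal_span f (c ^+ k).
Proof.
move=> noethR fcover; apply: exp_mem_ideal => //; first exact: ideal_span_ideal.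
by move=> q qP qNc; have [x qNfx] := fcover q qP qNc; exists (f x) => //; apply: ideal_span_gen.
Qed.

End Ideals.

Section Fractions.
Variables (R : comPzRingType) (N : lmodType R).
Implicit Types (p q : R -> Prop) (x y z : N * R).

Definition cross_diff x y : N := y.2 *: x.1 - x.2 *: y.1.

Lemma loc_eq_of_cross p x y : ~ p 1 -> y.2 *: x.1 = x.2 *: y.1 -> loc_eq p x y.
Proof. by move=> pN1 Exy; exists 1; rewrite Exy subrr scaler0. Qed.

Lemma loc_eq_sym p x y : loc_eq p x y -> loc_eq p y x.
Proof. by move=> [t [pNt Et]]; exists t; rewrite -opprB scalerN Et oppr0. Qed.

Lemma loc_eq_trans p x y z : prime_ideal p -> ~ p y.2 ->
  loc_eq p x y -> loc_eq p y z -> loc_eq p x z.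
Proof.
case: x y z => [x1 x2] [y1 y2] [z1 z2] pP pNy [t1 [pNt1 E1]] [t2 [pNt2 E2]] /=.
exists (t1 * t2 * y2); split; first by do 2 apply: prime_notM => //.
rewrite -scalerA; have -> : y2 *: (z2 *: x1 - x2 *: z1) =
    z2 *: (y2 *: x1 - x2 *: y1) + x2 *: (z2 *: y1 - y2 *: z1).
  rewrite !scalerBr !scalerA [z2 * x2]mulrC [y2 * z2]mulrC [y2 * x2]mulrC.
  by rewrite addrA subrK.
rewrite scalerDr !scalerA.
rewrite (_ : t1 * t2 * z2 = t2 * z2 * t1); last by ring.
rewrite (_ : t1 * t2 * x2 = t1 * x2 * t2); last by ring.
by rewrite -!scalerA E1 E2 !scaler0 addr0.
Qed.

Lemma loc_eq_of_killed p x y e : prime_ideal p -> ~ p x.2 -> ~ p y.2 ->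
  (x.2 * y.2) ^+ e *: cross_diff x y = 0 -> loc_eq p x y.
Proof.
move=> pP pNx pNy Exy; exists ((x.2 * y.2) ^+ e); split=> //.
by apply: prime_notX => //; apply: prime_notM.
Qed.

Lemma ann_ideal (v : N) : ideal (fun r => r *: v = 0).
Proof.
split; first by rewrite scale0r.
split; first by move=> r s rv sv; rewrite scalerDl rv sv addr0.
by move=> r s sv; rewrite -scalerA sv scaler0.
Qed.

Lemma exp_annihilate_uniform (I : finType) (r : I -> R) (v : I -> N) :
  (forall i, exists e, r i ^+ e *: v i = 0) -> exists E, forall i, r i ^+ E *: v i = 0.
Proof.
move=> /fin_all_exists[e rv]; exists (\max_i e i) => i.
by rewrite -(subnK (leq_bigmax i)) exprD -scalerA rv scaler0.
Qed.

(* The sheaf property of the localizations of [N] over the basic open [D(c)]. *)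
Lemma glue_fractions (T : N * R -> Prop) c : noetherian_ring R ->
  (forall q, prime_ideal q -> ~ q c -> exists2 x, T x & ~ q x.2) ->
  (forall x y, T x -> T y -> exists e, (x.2 * y.2) ^+ e *: cross_diff x y = 0) ->
  exists v k, forall y, T y -> forall q, prime_ideal q -> ~ q c -> ~ q y.2 ->
    loc_eq q (v, c ^+ k) y.
Proof.
move=> noethR Tcover Tcompat.
have [k0 [n [d [x Ec]]]] : exists k, ideal_span (fun x : {x | T x} => (sval x).2) (c ^+ k).
  apply: exp_mem_ideal_span => // q qP /(Tcover q qP)[x Tx qNx].
  by exists (exist T x Tx).
pose g i := (sval (x i)).2; pose m i := (sval (x i)).1.
have [E compatE] : exists E, forall ij : 'I_n * 'I_n,
    (g ij.1 * g ij.2) ^+ E *: cross_diff (sval (x ij.1)) (sval (x ij.2)) = 0.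
  by apply: exp_annihilate_uniform => ij; apply: Tcompat; apply: svalP.
(* Raising to the power [E] turns agreement up to torsion into exact agreement. *)
pose gE i := g i ^+ E.+1; pose mE i := g i ^+ E *: m i.
have gE_compat i j : gE j *: mE i = gE i *: mE j.
  have Eij : ((g i * g j) ^+ E * g j) *: m i = ((g i * g j) ^+ E * g i) *: m j.
    by have := compatE (i, j); rewrite /cross_diff scalerBr !scalerA => /subr0_eq.
  rewrite /gE /mE /= !scalerA.
  have -> : g j ^+ E.+1 * g i ^+ E = (g i * g j) ^+ E * g j by rewrite exprMn exprS; ring.
  by rewrite Eij exprMn exprS; congr (_ *: _); ring.
have [k [n' [d' [s Ec']]]] : exists k, ideal_span gE (c ^+ k).
  apply: exp_mem_ideal_span => // q qP qNc.
  have : ~ q (c ^+ k0) by apply: prime_notX.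
  rewrite Ec => /(ideal_notsum (proj1 qP))[i qNg].
  by exists i; apply: prime_notX.
exists (\sum_l d' l *: mE (s l)), k => y Ty q qP qNc qNy.
have : ~ q (c ^+ k) by apply: prime_notX.
rewrite Ec' => /(ideal_notsum (proj1 qP))[l qNgE].
have qNg : ~ q (g (s l)) by move: qNgE; rewrite /gE exprS; apply: ideal_notMl (proj1 qP).
have q1 : ~ q 1 by case: qP => _ [].
apply: (loc_eq_trans (y := (mE (s l), gE (s l)))) => //.
  apply: loc_eq_of_cross => //=; rewrite scaler_sumr scaler_suml.
  by apply: eq_bigr => l' _; rewrite scalerA mulrC -scalerA gE_compat scalerA.
apply: (loc_eq_trans (y := (m (s l), g (s l)))) => //.
  by apply: loc_eq_of_cross => //=; rewrite /mE /gE scalerA -exprS.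
have [e Exy] := Tcompat _ _ (svalP (x (s l))) Ty.
exact: loc_eq_of_killed Exy.
Qed.

End Fractions.

Section RegularSequence.
Variables (R : comPzRingType) (N : lmodType R) (a b : R).
Hypothesis a_reg : forall v : N, a *: v = 0 -> v = 0.

Lemma exp_reg k (v : N) : a ^+ k *: v = 0 -> v = 0.
Proof.
elim: k v => [|k IHk] v; first by rewrite expr0 scale1r.
by rewrite exprS -scalerA => /a_reg /IHk.
Qed.

(* The radical argument yields a power of [x.2 y.2 a]; regularity of [a]
   cancels the power of [a]. *)
Lemma killed_of_loc_eq (x y : N * R) : noetherian_ring R ->
  (forall q, prime_ideal q -> ~ q x.2 -> ~ q y.2 -> ~ q a -> loc_eq q x y) ->
  exists e, (x.2 * y.2) ^+ e *: cross_diff x y = 0.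
Proof.
move=> noethR xy_loc.
have [e] : exists e, (x.2 * y.2 * a) ^+ e *: cross_diff x y = 0.
  apply: exp_mem_ideal noethR (ann_ideal _) _ => q qP qNxya.
  have qI := proj1 qP; have qNxy := ideal_notMl qI qNxya.
  have [t [qNt Et]] := xy_loc q qP (ideal_notMl qI qNxy) (ideal_notMr qI qNxy)
    (ideal_notMr qI qNxya).
  by exists t.
by rewrite exprMn mulrC -scalerA => /exp_reg; exists e.
Qed.

Hypothesis b_reg : forall v w : N, b *: v = a *: w -> exists u, v = a *: u.

Lemma b_reg_mod_exp k (v w : N) : b *: v = a ^+ k *: w -> exists u, v = a ^+ k *: u.
Proof.
elim: k v w => [|k IHk] v w; first by exists v; rewrite expr0 scale1r.
move=> Ebv; have [u Eu] : exists u, v = a ^+ k *: u.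
  by apply: (IHk _ (a *: w)); rewrite scalerA -exprSr.
have : a ^+ k *: (b *: u - a *: w) = 0.
  by rewrite scalerBr [a ^+ k *: _]scalerA mulrC -scalerA -Eu Ebv scalerA -exprSr subrr.
move=> /exp_reg /subr0_eq /b_reg[u' Eu']; exists u'.
by rewrite Eu Eu' scalerA -exprSr.
Qed.

Lemma exp_b_reg_mod_exp l k (v w : N) :
  b ^+ l *: v = a ^+ k *: w -> exists u, v = a ^+ k *: u.
Proof.
elim: l v w => [|l IHl] v w; first by rewrite expr0 scale1r => ->; exists w.
by rewrite exprSr -scalerA => /IHl[u /b_reg_mod_exp].
Qed.

End RegularSequence.

Lemma colon_prime (R : comPzRingType) (M : lmodType R) (P : M -> Prop) :
  prime_submodule P -> prime_ideal (colon P).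
Proof.
move=> [[P0 [PD PZ]] [[m0 Pm0] Pprime]].
split.
  split; first by move=> m; rewrite scale0r.
  split; first by move=> r s Pr Ps m; rewrite scalerDl; apply: PD.
  by move=> r s Ps m; rewrite -scalerA; apply: PZ.
split; first by move=> P1; apply: Pm0; rewrite -[m0]scale1r.
move=> r s Prs; case: (classic (colon P r)) => [Pr | NPr]; [by left | right] => m.
by case: (Pprime r (s *: m)) => //; rewrite scalerA.
Qed.

Section Sheaf.
Variables (R : comPzRingType) (M N : lmodType R) (K : M -> Prop) (a b : R).
Hypotheses (noethR : noetherian_ring R) (M_faithful : faithful M) (M_primeful : primeful M).
Hypotheses (a_K : colon K a) (b_K : colon K b).
Hypothesis a_reg : forall v : N, a *: v = 0 -> v = 0.
Hypothesis b_reg : forall v w : N, b *: v = a *: w -> exists u, v = a *: u.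

Let U P := prime_submodule P /\ ~ VZ K P.

Lemma Supp_prime q : Supp U q -> prime_ideal q.
Proof. by move=> [P [[PP _] <-]]; apply: colon_prime. Qed.

Lemma Supp_of_colon q c : prime_ideal q -> colon K c -> ~ q c -> Supp U q.
Proof.
move=> qP Kc qNc; case: M_primeful => [M0 | Mlift].
  have R10 : (1 : R) = 0 by apply: M_faithful => m; apply: M0.
  by case: qP => [[q0 _] [qN1 _]]; rewrite R10 in qN1.
have annq r : ann M r -> q r by move=> /M_faithful ->; case: qP => [[]].
have [P [PP EP]] := Mlift q qP annq.
by exists P; split=> //; split=> // -[_ KP]; apply: qNc; rewrite -EP; apply: KP.
Qed.

Section GlobalSections.
Variable gamma : (R -> Prop) -> N * R.
Hypothesis gammaA : A_section U gamma.

Definition represents (x : N * R) : Prop :=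
  forall q, Supp U q -> ~ q x.2 -> loc_eq q x (gamma q).

Definition represents_on_Da (x : N * R) : Prop :=
  forall q, prime_ideal q -> ~ q x.2 -> ~ q a -> loc_eq q x (gamma q).

Lemma represents_locally p : Supp U p -> exists2 x, represents x & ~ p x.2.
Proof.
move=> [Q [UQ <-]].
have [W [[L [_ WE]] [_ [WQ [s [m gammaW]]]]]] := proj2 gammaA Q UQ.
have [QP NVQ] := proj1 (WE Q) WQ.
have [j Lj NQj] : exists2 j, colon L j & ~ colon Q j.
  apply: NNPP => NLQ; apply: NVQ; split=> // r Lr.
  by apply: NNPP => NQr; apply: NLQ; exists r.
have QpP := colon_prime QP.
have [NQs _] := gammaW Q WQ.
exists (j *: m, j * s) => [q [P [[PP _] <-]] /= NPjs|]; last exact: prime_notM.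
have PpP := colon_prime PP.
have NPj : ~ colon P j := ideal_notMl (proj1 PpP) NPjs.
have [NPs gammaP] := gammaW P (proj2 (WE P) (conj PP (fun VP => NPj (proj2 VP j Lj)))).
apply: (loc_eq_trans (y := (m, s))) => //; last exact: loc_eq_sym.
by apply: loc_eq_of_cross; [case: PpP => _ [] | rewrite /= scalerA mulrC].
Qed.

Lemma killed_of_represents x y : represents_on_Da x -> represents y ->
  exists e, (x.2 * y.2) ^+ e *: cross_diff x y = 0.
Proof.
move=> xA yR; apply: (killed_of_loc_eq a_reg) => // q qP qNx qNy qNa.
have Uq := Supp_of_colon qP a_K qNa.
have gammaq_den : ~ q (gamma q).2 by apply: (proj1 gammaA).
exact: loc_eq_trans qP gammaq_den (xA q qP qNx qNa) (loc_eq_sym (yR q Uq qNy)).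
Qed.

(* By the regularity of [a], a fraction is determined by its germs on [D(a)],
   which lies in [Supp U]. *)
Lemma representsE x : represents x <-> represents_on_Da x.
Proof.
split=> [xR q qP qNx qNa | xA q Uq qNx]; first by apply: xR => //; apply: Supp_of_colon qNa.
have qP := Supp_prime Uq; have [y yR qNy] := represents_locally Uq.
have [e Exy] := killed_of_represents xA yR.
exact: loc_eq_trans qP qNy (loc_eq_of_killed qP qNx qNy Exy) (yR q Uq qNy).
Qed.

Lemma represents_on_colon c : colon K c -> exists v k, represents (v, c ^+ k.+1).
Proof.
move=> Kc.
have [v [k vE]] := glue_fractions (T := represents) (c := c) noethR
  (fun q qP qNc => represents_locally (Supp_of_colon qP Kc qNc))
  (fun x y xR yR => killed_of_represents (proj1 (representsE x) xR) yR).
exists (c *: v), k => q Uq /= qNck; have qP := Supp_prime Uq.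
have qNc : ~ q c by move: qNck; rewrite exprS; apply: ideal_notMl (proj1 qP).
have [y yR qNy] := represents_locally Uq.
apply: (loc_eq_trans (y := (v, c ^+ k))) => //; first exact: prime_notX.
  by apply: loc_eq_of_cross; [case: qP => _ [] | rewrite /= scalerA -exprSr].
exact: loc_eq_trans qP qNy (vE y yR q qP qNc qNy) (yR q Uq qNy).
Qed.

(* [b] is regular on [N/aN], so the two fractions over powers of [a] and [b]
   force the numerator over [a] to be divisible by that power of [a]. *)
Lemma represents_const : exists n, represents (n, 1).
Proof.
have [x [ka xR]] := represents_on_colon a_K.
have [y [kb yR]] := represents_on_colon b_K.
have [e] := killed_of_represents (proj1 (representsE _) xR) yR.
rewrite /cross_diff /= exprMn -!exprM -scalerA => /(exp_reg a_reg).
rewrite scalerBr !scalerA -exprD mulrC -scalerA => /subr0_eq.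
move=> /(exp_b_reg_mod_exp a_reg b_reg)[n En].
exists n; apply/representsE => q qP _ qNa.
have Uq := Supp_of_colon qP a_K qNa.
apply: (loc_eq_trans (y := (x, a ^+ ka.+1))) => //; first exact: prime_notX.
  by apply: loc_eq_of_cross; [case: qP => _ [] | rewrite /= scale1r En].
by apply: xR => //; apply: prime_notX.
Qed.

End GlobalSections.

Lemma const_inj (n n' : N) : (forall p, Supp U p -> loc_eq p (n, 1) (n', 1)) -> n = n'.
Proof.
move=> nn'; have [e] := killed_of_loc_eq a_reg (x := (n, 1)) (y := (n', 1)) noethR
  (fun q qP _ _ qNa => nn' q (Supp_of_colon qP a_K qNa)).
by rewrite /cross_diff /= mulr1 expr1n !scale1r => /subr0_eq.
Qed.

Lemma A_iso_N_const : submodule K -> A_iso_N N U.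
Proof.
move=> K_sub; have Up1 p : Supp U p -> ~ p 1 by move=> /Supp_prime[_ []].
exists (fun n _ => (n, 1)); split.
  move=> n; split=> [p /Up1 //|Q UQ].
  exists U; split; first by exists K.
  do 2 split=> //; exists 1, n => P UP.
  have /Up1 UP1 : Supp U (colon P) by exists P.
  by split=> //; apply: loc_eq_of_cross.
split=> [x y p /Up1 p1|]; first by apply: loc_eq_of_cross; rewrite //= mulr1 !scale1r.
split=> [r x p /Up1 p1|]; first exact: loc_eq_of_cross.
split=> [x y|gamma gammaA]; first exact: const_inj.
have [n nR] := represents_const gammaA.
by exists n => p Up; apply: nR => //; apply: Up1.
Qed.

End Sheaf.

Lemma N_sequence2_reg (R : comPzRingType) (N : lmodType R) (a b : R) :
  N_sequence N [:: a; b] ->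
  (forall v : N, a *: v = 0 -> v = 0) /\
  (forall v w : N, b *: v = a *: w -> exists u, v = a *: u).
Proof.
move=> [ab_reg _]; split=> [v av0 | v w Ebv].
  have [|u ->] := ab_reg 0%N erefl v; last by rewrite big_ord0.
  by exists (fun=> 0); rewrite big_ord0 av0.
have [|u ->] := ab_reg 1%N erefl v; last by exists (u 0%N); rewrite big_ord1.
by exists (fun=> w); rewrite big_ord1 Ebv.
Qed.

Theorem corollary3p18 (R : comPzRingType) (M N : lmodType R)
    (K : M -> Prop) :
  noetherian_ring R ->
  faithful M -> primeful M ->
  (exists P : M -> Prop, prime_submodule P) ->
  submodule K ->
  (exists s : seq R, size s = 2%N /\ (forall a, a \in s -> colon K a) /\
     N_sequence N s) ->
  A_iso_N N (fun P => prime_submodule P /\ ~ VZ K P).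
Proof.
move=> noethR M_faithful M_primeful _ K_sub [s [s2 [sK s_seq]]].
case: s s2 sK s_seq => [|a [|b []]] // _ abK /N_sequence2_reg[a_reg b_reg].
have a_K : colon K a by apply: abK; rewrite mem_head.
have b_K : colon K b by apply: abK; rewrite !inE eqxx orbT.
exact: A_iso_N_const noethR M_faithful M_primeful a_K b_K a_reg b_reg K_sub.
Qed.
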